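(* Let $\Bbbk$ be a field of characteristic zero, let $V$ be a finite-dimensional $\Bbbk$-vector space, let $m\ge 2$, and for each $\ell=2,\dots,m$ let $\Psi_\ell:V^{\ell}\to V$ be a symmetric $\Bbbk$-multilinear map. Consider the polynomial map $F:V\to V$, $F(x)=x-\sum_{\ell=2}^m\Psi_\ell(x,\dots,x)$, and the algebra $A=(V,\{\Psi_\ell\}_{\ell=2}^m)$. Then $F$ is invertible (i.e. is a polynomial automorphism of $V$) if and only if $A$ is a Yagzhev algebra of some order $q_0$, i.e. if and only if there is $q_0$ such that for every $q\ge q_0$ and every $a\in A$ one has $\sum_{|t|=q}t(a)=0$.
   Context: Terms are formal expressions defined inductively: the symbol $x$ is a term with $|x|=1$; if $t_1,\dots,t_\ell$ are terms and $2\le \ell\le m$, then $\Psi_\ell(t_1,\dots,t_\ell)$ is a term with $|\Psi_\ell(t_1,\dots,t_\ell)|=|t_1|+\dots+|t_\ell|$. Different formal expressions are different terms even if they define the same element (e.g. $\Psi_2(x,\Psi_3(x,x,x))$ and $\Psi_2(\Psi_3(x,x,x),x)$ are distinct terms); $|t|$ is the number of occurrences of $x$ in $t$. For $a\in A$, $t(a)$ denotes the element obtained by substituting $a$ for $x$ and evaluating. The sum $\sum_{|t|=q}$ runs over all (finitely many) terms $t$ with $|t|=q$. The algebra $A$ is called a Yagzhev algebra of order $q_0$ if $\sum_{|t|=q}t(a)=0$ for all $a\in A$ and all $q\ge q_0$. *)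

From HB Require Import structures.
From mathcomp Require Import all_boot all_order all_algebra all_fingroup.
From mathcomp Require Import mpoly.
From Stdlib Require List.
Set Implicit Arguments. Unset Strict Implicit. Unset Printing Implicit Defensive.
Import GRing.Theory.
Local Open Scope ring_scope.

(* Formal terms in the single variable x and the operation symbols Psi_l. *)
Inductive term : Type :=
| TX : term
| TNode : nat -> seq term -> term.

Fixpoint term_wf (m : nat) (t : term) : bool :=
  match t with
  | TX => true
  | TNode l ts => [&& (2 <= l)%N, (l <= m)%N, size ts == l & all (term_wf m) ts]
  end.

Fixpoint term_size (t : term) : nat :=
  match t with
  | TX => 1%N
  | TNode _ ts => sumn (map term_size ts)
  end.

Fixpoint term_eval (K : fieldType) (n : nat)
    (Psi : forall l : nat, ('I_l -> 'rV[K]_n) -> 'rV[K]_n) (a : 'rV[K]_n)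
    (t : term) : 'rV[K]_n :=
  match t with
  | TX => a
  | TNode l ts =>
      Psi l (fun i : 'I_l => nth a (map (term_eval Psi a) ts) i)
  end.

Definition set_arg (T : Type) (l : nat) (f : 'I_l -> T) (i : 'I_l) (u : T) :
  'I_l -> T := fun j => if j == i then u else f j.

Definition multilinear (K : fieldType) (n l : nat)
    (P : ('I_l -> 'rV[K]_n) -> 'rV[K]_n) : Prop :=
  forall (f : 'I_l -> 'rV[K]_n) (i : 'I_l) (c : K) (u v : 'rV[K]_n),
    P (set_arg f i (c *: u + v)) = c *: P (set_arg f i u) + P (set_arg f i v).

Definition symmetric_map (K : fieldType) (n l : nat)
    (P : ('I_l -> 'rV[K]_n) -> 'rV[K]_n) : Prop :=
  forall (s : 'S_l) (f : 'I_l -> 'rV[K]_n), P (f \o s) = P f.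

Definition yag_map (K : fieldType) (n m : nat)
    (Psi : forall l : nat, ('I_l -> 'rV[K]_n) -> 'rV[K]_n) (x : 'rV[K]_n) :
  'rV[K]_n := x - \sum_(2 <= l < m.+1) Psi l (fun _ => x).

Definition is_polymap (K : fieldType) (n : nat) (G : 'rV[K]_n -> 'rV[K]_n) : Prop :=
  exists P : 'I_n -> {mpoly K[n]},
    forall (x : 'rV[K]_n) (j : 'I_n), G x ord0 j = (P j).@[fun i => x ord0 i].

Definition is_polyaut (K : fieldType) (n : nat) (F : 'rV[K]_n -> 'rV[K]_n) : Prop :=
  is_polymap F /\
  exists G : 'rV[K]_n -> 'rV[K]_n, is_polymap G /\ cancel F G /\ cancel G F.

Definition sum_terms_vanish (K : fieldType) (n m : nat)
    (Psi : forall l : nat, ('I_l -> 'rV[K]_n) -> 'rV[K]_n) (q : nat)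
    (a : 'rV[K]_n) : Prop :=
  exists s : seq term,
    List.NoDup s /\
    (forall t, List.In t s <-> (term_wf m t /\ term_size t = q)) /\
    \sum_(t <- s) term_eval Psi a t = 0.

Definition yagzhev_of_order (K : fieldType) (n m : nat)
    (Psi : forall l : nat, ('I_l -> 'rV[K]_n) -> 'rV[K]_n) (q0 : nat) : Prop :=
  forall q : nat, (q0 <= q)%N -> forall a : 'rV[K]_n, sum_terms_vanish m Psi q a.

From HB Require Import structures.
From mathcomp Require Import all_boot all_order all_algebra all_fingroup.
From mathcomp Require Import mpoly.
From Stdlib Require Import FunctionalExtensionality.
Set Implicit Arguments. Unset Strict Implicit. Unset Printing Implicit Defensive.
Import GRing.Theory.
Local Open Scope ring_scope.

(* The formal inverse of [F = yag_map m Psi] is [G(y) = \sum_q S_q(y)] with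
   [S_q(y) = \sum_(|t| = q) t(y)]: a term of size [q] is [x] or a node [Psi_l] whose
   arguments have sizes forming a composition of [q], and by multilinearity this
   recursion says that [F(G(x y)) = x y] as a power series in [x].
   If [F] has a polynomial inverse of degree less than [q0], comparing coefficients of
   [x ^+ q] along the line [x y] gives [S_q = 0] for [q >= q0]. Conversely, if [S_q = 0]
   for [q >= q0], the truncation of [G] at order [m * q0] is a polynomial right inverse
   of [F]. It is also a left inverse: along a line [z x] the defect
   [e(z) = G(F(z x)) - z x] is a polynomial with [e(0) = 0] and [e = Phi(z x + e) - Phi(z x)],
   where [Phi = \sum_l Psi_l] has no terms of degree below two, so [e] is divisible by
   every power of [z]. Polynomials are compared through their values, which is where
   characteristic zero is used. *)

Lemma In_mem (T : eqType) (x : T) s : List.In x s <-> x \in s.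
Proof.
elim: s => //= y s IH; rewrite inE; split.
  by case=> [->|/IH ->]; rewrite ?eqxx ?orbT.
by case/orP=> [/eqP->|/IH]; [left|right].
Qed.

Lemma NoDup_uniq (T : eqType) (s : seq T) : List.NoDup s <-> uniq s.
Proof.
elim: s => [|x s IH] /=; first by split=> // _; constructor.
split=> [nd|/andP[xs us]].
  inversion nd; subst; apply/andP; split; last exact/IH.
  by apply/negP => /In_mem.
by constructor; [move/In_mem; apply/negP | exact/IH].
Qed.

Fixpoint choices (X : Type) (L : nat -> seq X) (k : nat) : seq (seq X) :=
  if k is k'.+1 then [seq rcons c x | c <- choices L k', x <- L k'] else [:: [::]].

Lemma mem_choices (X : eqType) (x0 : X) (L : nat -> seq X) k c :
  reflect (size c = k /\ forall i, (i < k)%N -> nth x0 c i \in L i) (c \in choices L k).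
Proof.
elim: k c => [|k IH] c /=.
  by rewrite inE; apply: (iffP eqP) => [->|[/size0nil]].
apply: (iffP allpairsP) => [[[c' x] /= [/IH[szc' Hc'] Hx ->]]|[]].
  rewrite size_rcons szc'; split=> // i; rewrite ltnS leq_eqVlt nth_rcons szc'.
  by case/orP=> [/eqP->|lt]; rewrite ?ltnn ?eqxx ?lt //; apply: Hc'.
case/lastP: c => // c x; rewrite size_rcons => -[szc] Hc; exists (c, x); split=> //=.
  apply/IH; split=> // i lt; have := Hc i (leqW lt).
  by rewrite nth_rcons szc lt.
by have := Hc k (leqnn _); rewrite nth_rcons szc ltnn eqxx.
Qed.

Lemma choices_uniq (X : eqType) (L : nat -> seq X) k :
  (forall i, uniq (L i)) -> uniq (choices L k).
Proof.
move=> uL; elim: k => //= k IH; apply: allpairs_uniq => // -[c x] [c' x'] _ _.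
exact: rcons_inj.
Qed.

Lemma nth_le_sumn (s : seq nat) i : (nth 0 s i <= sumn s)%N.
Proof. by elim: s i => [|x s IH] [|i] //=; rewrite ?leq_addr // (leq_trans (IH i)) ?leq_addl. Qed.

Lemma nth_lt_sumn (s : seq nat) i : (1 < size s)%N ->
  (forall j, (j < size s)%N -> (0 < nth 0 s j)%N) -> (i < size s)%N -> (nth 0 s i < sumn s)%N.
Proof.
case: s => [|x [|y s]] //= _ pos.
have /= x_gt0 := pos 0%N isT; have /= y_gt0 := pos 1%N isT.
case: i => [|i] _ /=; first by rewrite -addn1 leq_add2l (leq_trans y_gt0) ?leq_addr.
by rewrite -add1n leq_add // (nth_le_sumn (y :: s) i).
Qed.

Lemma sumn_le_size_mul (s : seq nat) b : (forall i, (i < size s)%N -> (nth 0%N s i < b)%N) ->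
  (sumn s <= size s * b)%N.
Proof.
elim: s => //= x s IH lt_sb; rewrite mulSn leq_add //; first exact: ltnW (lt_sb 0%N isT).
by apply: IH => i; apply: (lt_sb i.+1).
Qed.

Lemma big_pred1_uniq (I : eqType) (V : nmodType) (r : seq I) k (F : I -> V) :
  uniq r -> \sum_(i <- r | i == k) F i = if k \in r then F k else 0.
Proof.
move=> ur; case: ifP => [kr|kr]; last by rewrite big1_seq // => i /andP[/eqP-> ]; rewrite kr.
by rewrite -big_filter (eq_filter (_ : _ =1 pred1 k)) // filter_pred1_uniq // big_seq1.
Qed.

Lemma prod_expr_nth (R : comNzRingType) (x : R) (c : seq nat) :
  \prod_(0 <= i < size c) x ^+ nth 0%N c i = x ^+ sumn c.
Proof. by rewrite sumnE -prodrXr [RHS](big_nth 0%N). Qed.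

Lemma addr_subr_eq (V : zmodType) (a e A B : V) : a + e - A = a - B -> e = A - B.
Proof. by move/eqP; rewrite subr_eq -addrA => /eqP/addrI->; rewrite addrC. Qed.

Lemma pchar0_natr_inj (K : fieldType) : [pchar K] =i pred0 -> injective (fun k : nat => k%:R : K).
Proof.
move=> /pcharf0P K0 i j eq_ij.
have le_eq a b : (a <= b)%N -> a%:R = b%:R :> K -> (b <= a)%N.
  by move=> le_ab /eqP; rewrite eq_sym -subr_eq0 -natrB // K0 subn_eq0.
apply/eqP; rewrite eqn_leq; case/orP: (leq_total i j) => le.
  by rewrite le le_eq.
by rewrite le (le_eq j i).
Qed.

Lemma pchar0_poly_horner_inj (K : fieldType) (p q : {poly K}) :
  [pchar K] =i pred0 -> (forall x, p.[x] = q.[x]) -> p = q.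
Proof.
move=> K0 eq_pq; apply/eqP; rewrite -subr_eq0; apply/negPn/negP => nz_pq.
have roots : all (root (p - q)) [seq i%:R | i <- iota 0 (size (p - q))].
  by apply/allP => x /mapP[i _ ->]; rewrite /root hornerD hornerN eq_pq subrr.
have := max_poly_roots nz_pq roots.
rewrite map_inj_uniq ?iota_uniq ?size_map ?size_iota ?ltnn.
  by move/(_ isT).
exact: pchar0_natr_inj.
Qed.

Lemma dvdp_sum (K : fieldType) (I : Type) (r : seq I) (P : pred I) (F : I -> {poly K}) d :
  (forall i, P i -> d %| F i) -> d %| \sum_(i <- r | P i) F i.
Proof. by move=> dvdF; apply: (big_ind (fun p => d %| p)); [apply: dvdp0 | apply: dvdp_add |]. Qed.

Lemma dvdp_Xn_prod (K : fieldType) (a : nat -> {poly K}) l :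
  (forall i, 'X %| a i) -> 'X^l %| \prod_(0 <= i < l) a i.
Proof.
move=> dvdXa; elim: l => [|l IH]; first by rewrite big_nil expr0 dvd1p.
by rewrite big_nat_recr //= exprS mulrC; apply: dvdp_mul.
Qed.

Lemma dvdp_Xn_prodB (K : fieldType) (a b : nat -> {poly K}) k l : (0 < k)%N ->
    (forall i, 'X %| b i) -> (forall i, 'X^k %| a i - b i) ->
  'X^(k + l) %| \prod_(0 <= i < l.+1) a i - \prod_(0 <= i < l.+1) b i.
Proof.
move=> k_gt0 dvdXb dvdXab.
have dvdXa i : 'X %| a i.
  rewrite -(subrK (b i) (a i)); apply: dvdp_add (dvdXb i).
  by apply: dvdp_trans (dvdXab i); rewrite -{1}(expr1 'X) dvdp_exp2l.
elim: l => [|l IH]; first by rewrite !big_nat1 addn0.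
rewrite big_nat_recr // [X in _ - X]big_nat_recr //=.
set A := \prod_(0 <= i < l.+1) a i; set B := \prod_(0 <= i < l.+1) b i.
rewrite (_ : A * a l.+1 - B * b l.+1 = A * (a l.+1 - b l.+1) + (A - B) * b l.+1); last first.
  by rewrite mulrBr mulrBl addrA subrK.
apply: dvdp_add; last by rewrite addnS exprS mulrC; apply: dvdp_mul.
by rewrite addnC exprD; apply: dvdp_mul; [apply: dvdp_Xn_prod | apply: dvdXab].
Qed.

Section CongruenceModX.
Variable K : fieldType.
Implicit Types a b : {poly K}.

Definition eqmodX k a b := 'X^k %| a - b.

Lemma eqmodXxx k a : eqmodX k a a.
Proof. by rewrite /eqmodX subrr dvdp0. Qed.

Lemma eqmodXD k a a' b b' : eqmodX k a a' -> eqmodX k b b' -> eqmodX k (a + b) (a' + b').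
Proof. by move=> eq_a eq_b; rewrite /eqmodX opprD addrACA; apply: dvdp_add. Qed.

Lemma eqmodXM k a a' b b' : eqmodX k a a' -> eqmodX k b b' -> eqmodX k (a * b) (a' * b').
Proof.
move=> eq_a eq_b; rewrite /eqmodX (_ : a * b - a' * b' = a * (b - b') + (a - a') * b').
  by apply: dvdp_add; [apply: dvdp_mull | apply: dvdp_mulr].
by rewrite mulrBr mulrBl addrA subrK.
Qed.

Lemma eqmodX_sum k (I : Type) (r : seq I) (F G : I -> {poly K}) :
  (forall i, eqmodX k (F i) (G i)) -> eqmodX k (\sum_(i <- r) F i) (\sum_(i <- r) G i).
Proof.
move=> eqFG; elim: r => [|i r IH]; first by rewrite !big_nil eqmodXxx.
by rewrite !big_cons eqmodXD.
Qed.

Lemma eqmodX_prod k (I : Type) (r : seq I) (F G : I -> {poly K}) :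
  (forall i, eqmodX k (F i) (G i)) -> eqmodX k (\prod_(i <- r) F i) (\prod_(i <- r) G i).
Proof.
move=> eqFG; elim: r => [|i r IH]; first by rewrite !big_nil eqmodXxx.
by rewrite !big_cons eqmodXM.
Qed.

Lemma eqmodXX k a b e : eqmodX k a b -> eqmodX k (a ^+ e) (b ^+ e).
Proof.
by move=> eq_ab; elim: e => [|e IH]; rewrite ?eqmodXxx // !exprS eqmodXM.
Qed.

Lemma eqmodX_coef k a b i : eqmodX k a b -> (i < k)%N -> a`_i = b`_i.
Proof.
by case/dvdpP=> c /eqP; rewrite subr_eq => /eqP-> lt_ik; rewrite coefD coefMXn lt_ik add0r.
Qed.

Lemma dvdp_Xn_eq0 a : (forall k, 'X^k %| a) -> a = 0.
Proof.
move=> dvdXa; apply/eqP/negPn/negP => /dvdp_leq/(_ (dvdXa (size a))).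
by rewrite size_polyXn ltnn.
Qed.

Variable n : nat.
Implicit Types (P : {mpoly K[n]}) (u v : 'I_n -> {poly K}).

Lemma horner_mmap P u x : (mmap (@polyC K) u P).[x] = P.@[fun i => (u i).[x]].
Proof.
rewrite mevalE horner_sum; apply: eq_bigr => m _.
by rewrite hornerM hornerC horner_prod; congr (_ * _); apply: eq_bigr => i _; rewrite horner_exp.
Qed.

Lemma eqmodX_mmap k P u v : (forall i, eqmodX k (u i) (v i)) ->
  eqmodX k (mmap (@polyC K) u P) (mmap (@polyC K) v P).
Proof.
move=> eq_uv; apply: eqmodX_sum => m; apply: eqmodXM; first exact: eqmodXxx.
by apply: eqmodX_prod => i; apply: eqmodXX.
Qed.

(* [msize P] is one more than the total degree of [P]. *)
Lemma coef_mmap_line P (y : 'I_n -> K) q : (msize P <= q)%N ->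
  (mmap (@polyC K) (fun i => y i *: 'X) P)`_q = 0.
Proof.
move=> le_Pq; rewrite coef_sum big1_seq // => m /= /msize_mdeg_lt; rewrite mdegE => lt_mP.
rewrite /mmap1 (eq_bigr (fun i => y i ^+ m i *: 'X ^+ m i)) => [|i _]; last by rewrite exprZn.
rewrite scaler_prod prodrXr coefCM coefZ coefXn.
rewrite (_ : (q == _) = false) ?mulr0 //.
by apply/negbTE; rewrite neq_ltn (leq_trans lt_mP le_Pq) orbT.
Qed.

End CongruenceModX.

Section Multilinear.
Variables (K : fieldType) (n l : nat) (P : ('I_l -> 'rV[K]_n) -> 'rV[K]_n).
Hypothesis P_ml : multilinear P.

Lemma multilinear_set0 f i : P (set_arg f i 0) = 0.
Proof. by have := P_ml f i (-1) 0 0; rewrite scaler0 addr0 scaleN1r addNr. Qed.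

Lemma multilinear_eq0 f i : f i = 0 -> P f = 0.
Proof.
move=> fi0; rewrite -(multilinear_set0 f i); congr P.
by apply: functional_extensionality => j; rewrite /set_arg; case: eqP => // ->.
Qed.

Lemma multilinear_sum f i (X : Type) (r : seq X) (a : X -> K) (g : X -> 'rV[K]_n) :
  P (set_arg f i (\sum_(x <- r) a x *: g x)) = \sum_(x <- r) a x *: P (set_arg f i (g x)).
Proof.
elim: r => [|x r IH]; first by rewrite !big_nil multilinear_set0.
by rewrite !big_cons P_ml IH.
Qed.

Let splice k (A : nat -> 'rV[K]_n) (h : 'I_l -> 'rV[K]_n) : 'I_l -> 'rV[K]_n :=
  fun i => if (i < k)%N then A i else h i.

Let splice0 A h : splice 0 A h = h.
Proof. by apply: functional_extensionality. Qed.

Let eq_splice k A B h : (forall i, (i < k)%N -> A i = B i) -> splice k A h = splice k B h.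
Proof.
by move=> eqAB; apply: functional_extensionality => i; rewrite /splice; case: ifP => // /eqAB.
Qed.

Let spliceS k A h (lt_kl : (k < l)%N) :
  splice k.+1 A h = set_arg (splice k A h) (Ordinal lt_kl) (A k).
Proof.
apply: functional_extensionality => i; rewrite /set_arg /splice ltnS leq_eqVlt.
have -> : (i == Ordinal lt_kl) = (val i == k) by [].
by case: eqP => [->|]; rewrite ?ltnn.
Qed.

Let set_arg_splice k A h (lt_kl : (k < l)%N) u :
  set_arg (splice k A h) (Ordinal lt_kl) u = splice k A (set_arg h (Ordinal lt_kl) u).
Proof.
apply: functional_extensionality => i; rewrite /set_arg /splice.
have -> : (i == Ordinal lt_kl) = (val i == k) by [].
by case: eqP => [->|]; rewrite ?ltnn.
Qed.

Let multilinear_expand_prefix (X : eqType) (x0 : X) (L : nat -> seq X)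
    (a : nat -> X -> K) (g : nat -> X -> 'rV[K]_n) k (h : 'I_l -> 'rV[K]_n) :
  (k <= l)%N ->
  P (splice k (fun i => \sum_(x <- L i) a i x *: g i x) h) =
  \sum_(c <- choices L k) (\prod_(0 <= i < k) a i (nth x0 c i)) *:
     P (splice k (fun i => g i (nth x0 c i)) h).
Proof.
elim: k h => [|k IH] h lt_kl; first by rewrite splice0 big_seq1 big_geq // scale1r splice0.
rewrite spliceS multilinear_sum.
under eq_bigr => x _ do rewrite set_arg_splice (IH _ (ltnW lt_kl)).
rewrite [choices L k.+1]/= big_allpairs_dep exchange_big; apply: eq_bigr => x _.
rewrite scaler_sumr big_seq [RHS]big_seq; apply: eq_bigr => c /(mem_choices x0)[szc _].
rewrite scalerA [a k x * _]mulrC big_nat_recr //= spliceS set_arg_splice nth_rcons szc ltnn eqxx.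
congr (_ * _ *: P _).
  by apply: eq_big_nat => i /andP[_ lt]; rewrite nth_rcons szc lt.
by apply: eq_splice => i lt; rewrite nth_rcons szc lt.
Qed.

Lemma multilinear_expand (X : eqType) (x0 : X) (L : nat -> seq X)
    (a : nat -> X -> K) (g : nat -> X -> 'rV[K]_n) :
  P (fun i : 'I_l => \sum_(x <- L i) a i x *: g i x) =
  \sum_(c <- choices L l) (\prod_(0 <= i < l) a i (nth x0 c i)) *:
     P (fun i : 'I_l => g i (nth x0 c i)).
Proof.
have spliceT (A : nat -> 'rV[K]_n) : splice l A (fun=> 0) = fun i : 'I_l => A i.
  by apply: functional_extensionality => i; rewrite /splice ltn_ord.
transitivity (P (splice l (fun i => \sum_(x <- L i) a i x *: g i x) (fun=> 0))).
  by rewrite spliceT.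
rewrite (multilinear_expand_prefix x0) //.
by apply: eq_bigr => c _; rewrite spliceT.
Qed.

End Multilinear.

Fixpoint term_forall_ind (P : term -> Prop) (PX : P TX)
    (PN : forall l ts, List.Forall P ts -> P (TNode l ts)) (t : term) : P t :=
  match t with
  | TX => PX
  | TNode l ts => PN l ts ((fix all_ts ts : List.Forall P ts :=
      if ts is t :: ts' then List.Forall_cons _ (term_forall_ind PX PN t) (all_ts ts')
      else List.Forall_nil _) ts)
  end.

Fixpoint tree_of_term (t : term) : GenTree.tree unit :=
  if t is TNode l ts then GenTree.Node l (map tree_of_term ts) else GenTree.Leaf tt.

Fixpoint term_of_tree (g : GenTree.tree unit) : term :=
  if g is GenTree.Node l gs then TNode l (map term_of_tree gs) else TX.

Lemma tree_of_termK : cancel tree_of_term term_of_tree.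
Proof.
elim/term_forall_ind => //= l ts IH; congr TNode.
by elim: IH => //= t ts' -> _ {2}<-.
Qed.

HB.instance Definition _ := Countable.copy term (can_type tree_of_termK).

Lemma term_ind_mem (P : term -> Prop) : P TX ->
  (forall l ts, {in ts, forall t, P t} -> P (TNode l ts)) -> forall t, P t.
Proof.
move=> PX PN; elim/term_forall_ind => // l ts /List.Forall_forall IH.
by apply: PN => t /In_mem; apply: IH.
Qed.

Lemma term_size_gt0 m t : term_wf m t -> (0 < term_size t)%N.
Proof.
elim/term_ind_mem: t => //= l [|t ts] IH /and4P[l2 _ /eqP szl]; first by rewrite -szl in l2.
by move=> /andP[wt _]; apply: leq_trans (IH t (mem_head _ _) wt) (leq_addr _ _).
Qed.

Definition compositions l q := [seq c <- choices (fun _ => iota 1 q) l | sumn c == q].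

Definition arities m := index_iota 2 m.+1.

Lemma mem_arities m l : l \in arities m = (2 <= l <= m)%N.
Proof. by rewrite mem_index_iota ltnS. Qed.

(* Terms of size [q] and depth at most [f]; since the arguments of a node are
   strictly smaller than the node, [f = q] already gives all terms of size [q]. *)
Fixpoint enum_terms (m f q : nat) : seq term :=
  if f is f'.+1 then (if q == 1%N then [:: TX] else [::]) ++
    [seq TNode l ts | l <- arities m,
       ts <- [seq ts | c <- compositions l q,
                       ts <- choices (fun i => enum_terms m f' (nth 0%N c i)) l]]
  else [::].

Lemma enum_terms_wf m f q t : t \in enum_terms m f q -> term_wf m t /\ term_size t = q.
Proof.
elim: f q t => //= f IH q t; rewrite mem_cat => /orP[|].
  by case: eqP => [->|_]; rewrite ?inE // => /eqP->.
case/allpairsPdep=> l [ts [+ /allpairsPdep[c [ts' [+ /(mem_choices TX)[szt Ht] ->]]] ->]].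
rewrite mem_arities mem_filter => /andP[l2 lm] /andP[/eqP sc /(mem_choices 0%N)[szc _]].
have {}Ht i : (i < l)%N -> term_wf m (nth TX ts' i) /\ term_size (nth TX ts' i) = nth 0%N c i.
  by move=> lt; apply: IH; apply: Ht.
split; last first.
  rewrite /= -sc; congr sumn; apply: (@eq_from_nth _ 0%N); rewrite size_map ?szt ?szc //.
  by move=> i lt; rewrite (nth_map TX) ?szt // (Ht i lt).2.
rewrite /= l2 lm szt eqxx; apply/(all_nthP TX) => i; rewrite szt => lt.
exact: (Ht i lt).1.
Qed.

Lemma enum_terms_complete m f q t : (q <= f)%N -> term_wf m t -> term_size t = q ->
  t \in enum_terms m f q.
Proof.
elim: f q t => [|f IH] q t hq wt st.
  by move: (term_size_gt0 wt); rewrite st; case: q hq {st}.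
rewrite /= mem_cat; case: t wt st => [|l ts] wt st; first by rewrite -st mem_head.
apply/orP; right; move: wt => /= /and4P[l2 lm /eqP szl /allP wts].
have szl' : size (map term_size ts) = l by rewrite size_map.
have Hn i : (i < l)%N -> nth 0%N (map term_size ts) i = term_size (nth TX ts i).
  by move=> lt; rewrite (nth_map TX) ?szl.
have pos i : (i < l)%N -> (0 < term_size (nth TX ts i))%N.
  by move=> lt; apply: (term_size_gt0 (m := m)); apply/wts/mem_nth; rewrite szl.
have small i : (i < l)%N -> (term_size (nth TX ts i) < q)%N.
  move=> lt; rewrite -st -Hn //; apply: nth_lt_sumn; rewrite szl' //.
  by move=> j lt'; rewrite Hn ?pos.
apply/allpairsPdep; exists l, ts; split; rewrite ?mem_arities ?l2 //.
apply/allpairsPdep; exists (map term_size ts), ts; split => //.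
  rewrite mem_filter -[in _ == q]st eqxx; apply/(mem_choices 0%N); split=> // i lt.
  by rewrite mem_iota add1n ltnS Hn // pos //= ltnW ?small.
apply/(mem_choices TX); split => // i lt; rewrite Hn //.
apply: IH => //; first by rewrite -ltnS (leq_trans (small i lt) hq).
by apply/wts/mem_nth; rewrite szl.
Qed.

Lemma mem_enum_terms m f q t : (q <= f)%N ->
  (t \in enum_terms m f q) = term_wf m t && (term_size t == q).
Proof.
move=> qf; apply/idP/andP => [/enum_terms_wf[-> ->]//|[wt /eqP st]].
exact: enum_terms_complete.
Qed.

Lemma composition_of_enum_choice m f l q c ts : c \in compositions l q ->
  ts \in choices (fun i => enum_terms m f (nth 0%N c i)) l -> c = map term_size ts.
Proof.
rewrite mem_filter => /andP[_ /(mem_choices 0%N)[szc _]] /(mem_choices TX)[szt Hts].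
apply: (@eq_from_nth _ 0%N) => [|i]; rewrite ?size_map szc ?szt // => lt.
by rewrite (nth_map TX) ?szt // (enum_terms_wf (Hts i lt)).2.
Qed.

Lemma enum_terms_uniq m f q : uniq (enum_terms m f q).
Proof.
elim: f q => // f IH q /=; rewrite cat_uniq; apply/and3P; split.
- by case: (q == 1%N).
- by apply/hasPn => t /allpairsPdep[l [ts [_ _ ->]]]; case: (q == 1%N).
apply: allpairs_uniq_dep => [||[l ts] [l' ts'] _ _ /= [-> ->] //].
  exact: iota_uniq.
move=> l _; apply: allpairs_uniq_dep => [|c _|].
- by rewrite filter_uniq // choices_uniq // => i; apply: iota_uniq.
- exact: choices_uniq.
move=> [c ts] [c' ts'] /allpairsPdep[c1 [ts1 [Hc Hts [-> ->]]]].
move=> /allpairsPdep[c2 [ts2 [Hc' Hts' [-> ->]]]] /= eq_ts.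
by rewrite (composition_of_enum_choice Hc Hts) (composition_of_enum_choice Hc' Hts') eq_ts.
Qed.

Section TermSums.
Variables (K : fieldType) (n m : nat) (Psi : forall l, ('I_l -> 'rV[K]_n) -> 'rV[K]_n).
Arguments Psi : clear implicits.
Hypothesis Psi_ml : forall l, (2 <= l)%N -> (l <= m)%N -> multilinear (Psi l).

Local Notation "\Psi" := (term_eval Psi).

Definition term_sum (a : 'rV[K]_n) q := \sum_(t <- enum_terms m q q) \Psi a t.

Lemma term_sum_enum (a : 'rV[K]_n) q s : uniq s ->
    (forall t, (t \in s) = term_wf m t && (term_size t == q)) ->
  \sum_(t <- s) \Psi a t = term_sum a q.
Proof.
move=> us mem_s; apply: perm_big; apply: uniq_perm; rewrite ?enum_terms_uniq // => t.
by rewrite mem_s mem_enum_terms.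
Qed.

Lemma sum_terms_vanishE a q : sum_terms_vanish m Psi q a <-> term_sum a q = 0.
Proof.
split=> [[s [/NoDup_uniq us [mem_s <-]]]|S0].
  apply/esym/term_sum_enum => // t.
  by apply/idP/andP => [/In_mem/mem_s[-> ->]|[wt /eqP st]]; last exact/In_mem/mem_s.
exists (enum_terms m q q); split; first exact/NoDup_uniq/enum_terms_uniq.
split=> [t|]; last exact: S0.
split=> [/In_mem|[wt st]]; first by rewrite mem_enum_terms // => /andP[-> /eqP].
by apply/In_mem; rewrite mem_enum_terms // wt st eqxx.
Qed.

Lemma term_sum_rec a q : term_sum a q = (if q == 1%N then a else 0) +
  \sum_(l <- arities m) \sum_(c <- compositions l q)
     Psi l (fun i : 'I_l => term_sum a (nth 0%N c i)).
Proof.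
have fuel f q' : (q' <= f)%N -> \sum_(t <- enum_terms m f q') \Psi a t = term_sum a q'.
  by move=> le_q'f; apply: term_sum_enum; rewrite ?enum_terms_uniq // => t; rewrite mem_enum_terms.
rewrite -(fuel q.+1 q) // [enum_terms _ _ _]/= big_cat; congr (_ + _).
  by case: (q == 1%N); rewrite ?big_seq1 ?big_nil.
rewrite big_allpairs_dep big_seq [RHS]big_seq; apply: eq_bigr => l.
rewrite mem_arities => /andP[l2 lm].
rewrite big_allpairs_dep big_seq [RHS]big_seq; apply: eq_bigr => c.
rewrite mem_filter => /andP[_ /(mem_choices 0%N)[szc Hc]].
transitivity (Psi l (fun i : 'I_l => \sum_(t <- enum_terms m q (nth 0%N c i)) 1 *: \Psi a t)).
  rewrite [RHS](multilinear_expand (Psi_ml l2 lm) TX (fun i => enum_terms m q (nth 0%N c i))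
    (fun _ _ => 1) (fun _ t => \Psi a t)) big_seq [RHS]big_seq.
  apply: eq_bigr => ts /(mem_choices TX)[szt _]; rewrite big1_eq scale1r /=.
  by congr (Psi l _); apply: functional_extensionality => i; rewrite (nth_map TX) // szt.
congr (Psi l _); apply: functional_extensionality => i; under eq_bigr do rewrite scale1r.
by apply: fuel; have := Hc i (ltn_ord i); rewrite mem_iota add1n ltnS => /andP[].
Qed.

Lemma compositions_choices l q N : (q <= N)%N ->
  perm_eq (compositions l q) [seq c <- choices (fun _ => iota 1 N) l | sumn c == q].
Proof.
have uniq_choices N' : uniq (choices (fun _ => iota 1 N') l).
  by apply: choices_uniq => i; apply: iota_uniq.
move=> le_qN; apply: uniq_perm => [||c]; rewrite ?filter_uniq //.
rewrite !mem_filter; apply/andP/andP => -[/eqP sc /(mem_choices 0%N)[szc Hc]];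
  split; rewrite ?sc //; apply/(mem_choices 0%N); split=> // i lt; move: (Hc i lt);
  rewrite !mem_iota !add1n !ltnS => /andP[-> le_ci] //=.
- exact: leq_trans le_ci le_qN.
- by rewrite -sc nth_le_sumn.
Qed.

(* The truncation at order [N] of the formal inverse of [yag_map], evaluated at [x y]
   ([term_sum y q] is homogeneous of degree [q] in [y]). *)
Definition inv_trunc (y : 'rV[K]_n) N (x : K) := \sum_(q <- iota 1 N) x ^+ q *: term_sum y q.

Definition inv_trunc_err (y : 'rV[K]_n) N (x : K) := \sum_(l <- arities m)
  \sum_(c <- choices (fun _ => iota 1 N) l | (N < sumn c)%N)
     x ^+ sumn c *: Psi l (fun i : 'I_l => term_sum y (nth 0%N c i)).

Lemma Psi_inv_trunc y N x l : (2 <= l <= m)%N ->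
  Psi l (fun _ => inv_trunc y N x) = \sum_(c <- choices (fun _ => iota 1 N) l)
     x ^+ sumn c *: Psi l (fun i : 'I_l => term_sum y (nth 0%N c i)).
Proof.
case/andP=> l2 lm; rewrite (multilinear_expand (Psi_ml l2 lm) 0%N (fun _ => iota 1 N)
  (fun _ q => x ^+ q) (fun _ q => term_sum y q)) big_seq [RHS]big_seq.
by apply: eq_bigr => c /(mem_choices 0%N)[szc _]; rewrite -{1}szc prod_expr_nth.
Qed.

Let Psi_low y N x l := \sum_(q <- iota 1 N) x ^+ q *:
  \sum_(c <- compositions l q) Psi l (fun i : 'I_l => term_sum y (nth 0%N c i)).

Let Psi_inv_trunc_low y N x l : (2 <= l <= m)%N ->
  \sum_(c <- choices (fun _ => iota 1 N) l | ~~ (N < sumn c)%N)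
     x ^+ sumn c *: Psi l (fun i : 'I_l => term_sum y (nth 0%N c i)) = Psi_low y N x l.
Proof.
case/andP=> l2 lm.
transitivity (\sum_(q <- iota 1 N) \sum_(c <- choices (fun _ => iota 1 N) l | sumn c == q)
   x ^+ q *: Psi l (fun i : 'I_l => term_sum y (nth 0%N c i))); last first.
  rewrite big_seq [RHS]big_seq; apply: eq_bigr => q; rewrite mem_iota add1n ltnS => /andP[_ qN].
  by rewrite scaler_sumr (perm_big _ (compositions_choices l qN)) big_filter.
under [RHS]eq_bigr do rewrite big_mkcond.
rewrite exchange_big big_mkcond big_seq [RHS]big_seq.
apply: eq_bigr => c /(mem_choices 0%N)[szc Hc].
rewrite -big_mkcond (eq_bigl (fun q => q == sumn c)) => [|q]; last by rewrite eq_sym.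
rewrite big_pred1_uniq ?iota_uniq // mem_iota add1n ltnS -leqNgt.
suff -> : (0 < sumn c)%N by [].
have := Hc 0%N (leq_trans _ l2); rewrite mem_iota => /(_ isT) /andP[h _].
exact: leq_trans h (nth_le_sumn _ _).
Qed.

Let inv_trunc_rec y N x : (0 < N)%N ->
  inv_trunc y N x = x *: y + \sum_(l <- arities m) Psi_low y N x l.
Proof.
case: N => // N _; rewrite /Psi_low exchange_big /inv_trunc.
under [LHS]eq_bigr do rewrite term_sum_rec scalerDr scaler_sumr.
rewrite big_split /= big_cons big1_seq ?addr0 ?expr1 //= => q.
by rewrite mem_iota => /andP[+ _]; case: eqP => [->|_ _]; rewrite ?scaler0.
Qed.

Lemma yag_map_inv_trunc y N x : (0 < N)%N ->
  yag_map m Psi (inv_trunc y N x) = x *: y - inv_trunc_err y N x.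
Proof.
move=> N_gt0; rewrite /yag_map; have -> : \sum_(2 <= l < m.+1) Psi l (fun _ => inv_trunc y N x) =
    \sum_(l <- arities m) Psi_low y N x l + inv_trunc_err y N x.
  rewrite /inv_trunc_err -big_split big_seq [RHS]big_seq; apply: eq_bigr => l.
  rewrite mem_arities => l2m; rewrite Psi_inv_trunc // (bigID (fun c => N < sumn c)%N) /=.
  by rewrite addrC Psi_inv_trunc_low.
by rewrite [in X in X - _]inv_trunc_rec // opprD addrA addrK.
Qed.

End TermSums.

Section PolynomialMaps.
Variables (K : fieldType) (n : nat).
Local Notation V := 'rV[K]_n.

Lemma eq_polymap (G G' : V -> V) : G =1 G' -> is_polymap G -> is_polymap G'.
Proof. by move=> eqG [P HP]; exists P => x j; rewrite -eqG. Qed.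

Lemma polymap_id : is_polymap (@id V).
Proof. by exists (fun j => 'X_j) => x j; rewrite mevalXU. Qed.

Lemma polymap_cst (c : V) : is_polymap (fun=> c).
Proof. by exists (fun j => (c 0 j)%:MP) => x j; rewrite mevalC. Qed.

Lemma polymapD (G1 G2 : V -> V) : is_polymap G1 -> is_polymap G2 ->
  is_polymap (fun x => G1 x + G2 x).
Proof.
by move=> [P1 H1] [P2 H2]; exists (fun j => P1 j + P2 j) => x j; rewrite mevalD -H1 -H2 mxE.
Qed.

Lemma polymapZ (k : K) (G : V -> V) : is_polymap G -> is_polymap (fun x => k *: G x).
Proof. by move=> [P H]; exists (fun j => k *: P j) => x j; rewrite mevalZ -H mxE. Qed.

Lemma polymapN (G : V -> V) : is_polymap G -> is_polymap (fun x => - G x).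
Proof. by move/(polymapZ (-1)); apply: eq_polymap => x; rewrite scaleN1r. Qed.

Lemma polymap_sum (I : eqType) (r : seq I) (G : I -> V -> V) :
  {in r, forall i, is_polymap (G i)} -> is_polymap (fun x => \sum_(i <- r) G i x).
Proof.
elim: r => [|i r IH] Gr; first by apply: eq_polymap (polymap_cst 0) => x; rewrite big_nil.
have Gr' : {in r, forall j, is_polymap (G j)} by move=> j jr; apply: Gr; rewrite inE jr orbT.
by apply: eq_polymap (polymapD (Gr i (mem_head _ _)) (IH Gr')) => x; rewrite big_cons.
Qed.

Lemma polymap_choice (l : nat) (phi : nat -> V -> V) :
    (forall i, (i < l)%N -> is_polymap (phi i)) ->
  exists Q : nat -> 'I_n -> {mpoly K[n]}, forall i, (i < l)%N ->
     forall x j, phi i x 0 j = (Q i j).@[fun k => x 0 k].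
Proof.
elim: l => [|l IH] phiP; first by exists (fun _ _ => 0).
have [Q HQ] := IH (fun i lt => phiP i (leqW lt)); have [P HP] := phiP l (leqnn _).
exists (fun i => if i == l then P else Q i) => i; rewrite ltnS leq_eqVlt.
by case: eqP => [->|_] /= lt; [apply: HP | apply: HQ].
Qed.

(* Expand every argument of [P] along the standard basis [delta_mx 0 k]. *)
Lemma polymap_multilinear l (P : ('I_l -> V) -> V) (phi : nat -> V -> V) :
    multilinear P -> (forall i, (i < l)%N -> is_polymap (phi i)) ->
  is_polymap (fun x => P (fun i : 'I_l => phi i x)).
Proof.
move=> P_ml /polymap_choice[Q HQ]; case: (posnP n) => [n0|n_gt0].
  by exists (fun _ => 0) => x j; have := ltn_ord j; rewrite {2}n0.
pose x0 := Ordinal n_gt0.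
exists (fun j => \sum_(c <- choices (fun _ => index_enum 'I_n) l)
  (\prod_(0 <= i < l) Q i (nth x0 c i)) * (P (fun i => delta_mx 0 (nth x0 c i)) 0 j)%:MP).
move=> x j; have -> : (fun i : 'I_l => phi i x) =
    (fun i : 'I_l => \sum_(k <- index_enum 'I_n) phi i x 0 k *: delta_mx 0 k).
  by apply: functional_extensionality => i; rewrite {1}(row_sum_delta (phi i x)).
rewrite (multilinear_expand P_ml x0 (fun _ => index_enum 'I_n) (fun i k => phi i x 0 k)
   (fun _ k => delta_mx 0 k)) summxE rmorph_sum /=; apply: eq_bigr => c _.
rewrite mxE mevalM mevalC rmorph_prod /=; congr (_ * _).
by apply: eq_big_nat => i /andP[_ lt]; apply: HQ.
Qed.

End PolynomialMaps.

Section PolynomialTermMaps.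
Variables (K : fieldType) (n m : nat) (Psi : forall l, ('I_l -> 'rV[K]_n) -> 'rV[K]_n).
Arguments Psi : clear implicits.
Hypothesis Psi_ml : forall l, (2 <= l)%N -> (l <= m)%N -> multilinear (Psi l).
Variable phi : 'rV[K]_n -> 'rV[K]_n.
Hypothesis phi_poly : is_polymap phi.

Lemma polymap_term_eval t : term_wf m t -> is_polymap (fun x => term_eval Psi (phi x) t).
Proof.
elim/term_ind_mem: t => [_|l ts IH /and4P[l2 lm /eqP szl /allP wts]] //=.
have tsP i : (i < l)%N -> is_polymap (fun x => term_eval Psi (phi x) (nth TX ts i)).
  by move=> lt; have ti : nth TX ts i \in ts; [rewrite mem_nth ?szl | exact: IH (wts _ ti)].
apply: eq_polymap (polymap_multilinear (Psi_ml l2 lm) tsP) => x /=; congr (Psi l _).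
by apply: functional_extensionality => i; rewrite (nth_map TX) // szl.
Qed.

Lemma polymap_term_sum q : is_polymap (fun x => term_sum m Psi (phi x) q).
Proof.
apply: polymap_sum => t; rewrite mem_enum_terms // => /andP[wt _].
exact: polymap_term_eval.
Qed.

Lemma polymap_inv_trunc N c : is_polymap (fun x => inv_trunc m Psi (phi x) N c).
Proof. by apply: polymap_sum => q _; apply/polymapZ/polymap_term_sum. Qed.

End PolynomialTermMaps.

Lemma polymap_yag_map (K : fieldType) (n m : nat)
    (Psi : forall l, ('I_l -> 'rV[K]_n) -> 'rV[K]_n) :
  (forall l, (2 <= l)%N -> (l <= m)%N -> multilinear (Psi l)) -> is_polymap (yag_map m Psi).
Proof.
move=> Psi_ml.
apply: (eq_polymap (G := fun x => x + - \sum_(l <- arities m) Psi l (fun=> x))) => //.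
apply: polymapD; first exact: polymap_id.
apply/polymapN/polymap_sum => l.
rewrite mem_arities => /andP[l2 lm].
by apply: (polymap_multilinear (phi := fun=> id) (Psi_ml l l2 lm)) => i _; apply: polymap_id.
Qed.

Section Forward.
Variables (K : fieldType) (n m : nat) (Psi : forall l, ('I_l -> 'rV[K]_n) -> 'rV[K]_n).
Arguments Psi : clear implicits.
Hypothesis K0 : [pchar K] =i pred0.
Hypothesis Psi_ml : forall l, (2 <= l)%N -> (l <= m)%N -> multilinear (Psi l).

(* Along [x |-> inv_trunc y q x] the left inverse [G] undoes [yag_map], which agrees with
   [x y] up to order [q]; comparing coefficients of [x ^+ q] gives [term_sum y q] on one side
   and a coefficient of [G(x y)] above its degree on the other. *)
Lemma term_sum_eq0_of_inverse (P : 'I_n -> {mpoly K[n]}) (G : 'rV[K]_n -> 'rV[K]_n) y q :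
    (forall x j, G x 0 j = (P j).@[fun i => x 0 i]) -> cancel (yag_map m Psi) G ->
    (0 < q)%N -> (forall j, msize (P j) <= q)%N ->
  term_sum m Psi y q = 0.
Proof.
move=> GP GK q_gt0 szP; apply/rowP => j; rewrite mxE.
pose tau := \sum_(q' <- iota 1 q) (term_sum m Psi y q' 0 j) *: 'X^q'.
pose rho i := \sum_(l <- arities m) \sum_(c <- choices (fun _ => iota 1 q) l | (q < sumn c)%N)
  (Psi l (fun i0 => term_sum m Psi y (nth 0%N c i0)) 0 i) *: 'X^(sumn c).
pose u i := y 0 i *: 'X - rho i.
have rhoE x i : (rho i).[x] = inv_trunc_err m Psi y q x 0 i.
  rewrite horner_sum summxE; apply: eq_bigr => l _; rewrite horner_sum summxE.
  by apply: eq_bigr => c _; rewrite hornerZ hornerXn !mxE mulrC.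
have tauE x : tau.[x] = inv_trunc m Psi y q x 0 j.
  rewrite horner_sum summxE; apply: eq_bigr => q' _.
  by rewrite hornerZ hornerXn !mxE mulrC.
have GFu : mmap (@polyC K) u (P j) = tau.
  apply: (pchar0_poly_horner_inj K0) => x.
  rewrite horner_mmap tauE -(GK (inv_trunc m Psi y q x)) GP.
  apply: meval_eq => i; rewrite yag_map_inv_trunc // hornerD hornerN hornerZ hornerX rhoE.
  by rewrite !mxE mulrC.
have u_line : eqmodX q.+1 (mmap (@polyC K) u (P j)) (mmap (@polyC K) (fun i => y 0 i *: 'X) (P j)).
  apply: eqmodX_mmap => i; rewrite /eqmodX /u addrAC subrr add0r dvdpNr.
  apply: dvdp_sum => l _; apply: dvdp_sum => c lt_qc.
  by rewrite -mul_polyC; apply/dvdp_mull/dvdp_exp2l.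
have := eqmodX_coef u_line (ltnSn q); rewrite GFu coef_mmap_line // coef_sum.
rewrite (bigD1_seq q) ?iota_uniq ?mem_iota ?q_gt0 ?add1n ?ltnSn //=.
rewrite coefZ coefXn eqxx mulr1 big1 ?addr0 // => q' ne_q'q.
by rewrite coefZ coefXn eq_sym (negbTE ne_q'q) mulr0.
Qed.

End Forward.

Section Backward.
Variables (K : fieldType) (n m : nat) (Psi : forall l, ('I_l -> 'rV[K]_n) -> 'rV[K]_n).
Arguments Psi : clear implicits.
Hypothesis K0 : [pchar K] =i pred0.
Hypothesis Psi_ml : forall l, (2 <= l)%N -> (l <= m)%N -> multilinear (Psi l).
Local Notation V := 'rV[K]_n.

Lemma term_eval_at0 t : term_wf m t -> term_eval Psi 0 t = 0.
Proof.
elim/term_ind_mem: t => //= l ts IH /and4P[l2 lm /eqP szl /allP wts].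
have l_gt0 : (0 < l)%N by apply: leq_trans l2.
apply: (multilinear_eq0 (Psi_ml l2 lm) (i := Ordinal l_gt0)) => /=.
have t0 : nth TX ts 0 \in ts by rewrite mem_nth ?szl.
by rewrite (nth_map TX) ?szl // IH ?wts.
Qed.

Lemma term_sum_at0 q : term_sum m Psi 0 q = 0.
Proof.
rewrite /term_sum big_seq big1 // => t; rewrite mem_enum_terms // => /andP[wt _].
exact: term_eval_at0.
Qed.

Lemma yag_map0 : yag_map m Psi 0 = 0.
Proof.
rewrite /yag_map big_seq big1 ?subr0 // => l; rewrite mem_index_iota ltnS => /andP[l2 lm].
have l_gt0 : (0 < l)%N by apply: leq_trans l2.
exact: (multilinear_eq0 (Psi_ml l2 lm) (i := Ordinal l_gt0)).
Qed.

Variable q0 : nat.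
Hypothesis term_sum_vanish : forall a q, (q0 <= q)%N -> term_sum m Psi a q = 0.

(* The cut-off [m * q0] kills the error term of [yag_map_inv_trunc]: a composition of a
   larger number into at most [m] parts has a part of size at least [q0]. *)
Definition yag_inv (y : V) := inv_trunc m Psi y (m * q0).+1 1.

Lemma yag_invK : cancel yag_inv (yag_map m Psi).
Proof.
move=> y; rewrite /yag_inv yag_map_inv_trunc // scale1r.
rewrite [inv_trunc_err _ _ _ _ _]big_seq big1 ?subr0 // => l; rewrite mem_arities => /andP[l2 lm].
rewrite big_seq_cond big1 // => c /andP[/(mem_choices 0%N)[szc _] lt_Nc].
have [/allP small|] := boolP (all (fun i => nth 0%N c i < q0)%N (iota 0 l)).
  have : (sumn c <= m * q0)%N.
    rewrite (leq_trans _ (leq_mul lm (leqnn q0))) // -szc.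
    by apply: sumn_le_size_mul => i lt; apply: small; rewrite mem_iota add0n -szc.
  by rewrite leqNgt ltnW.
rewrite -has_predC => /hasP[i]; rewrite mem_iota add0n => /andP[_ lt_il] /=.
rewrite -leqNgt => le_q0ci.
by rewrite (multilinear_eq0 (Psi_ml l2 lm) (i := Ordinal lt_il)) ?scaler0 //= term_sum_vanish.
Qed.

(* [Psi_poly x0 l w] is [Psi l (w, ..., w)] for a vector [w] of polynomials, expanded along
   the standard basis; [x0] is any index, used as a default. *)
Definition Psi_poly (x0 : 'I_n) l (w : 'I_n -> {poly K}) (j : 'I_n) : {poly K} :=
  \sum_(c <- choices (fun _ => index_enum 'I_n) l)
    (\prod_(0 <= i < l) w (nth x0 c i)) * (Psi l (fun i => delta_mx 0 (nth x0 c i)) 0 j)%:P.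

Lemma horner_Psi_poly x0 l w j z : (2 <= l <= m)%N ->
  (Psi_poly x0 l w j).[z] = Psi l (fun=> \row_k (w k).[z]) 0 j.
Proof.
case/andP=> l2 lm; rewrite horner_sum.
have -> : (fun=> \row_k (w k).[z]) = (fun _ : 'I_l =>
    \sum_(k <- index_enum 'I_n) (\row_k (w k).[z]) 0 k *: delta_mx 0 k).
  by apply: functional_extensionality => i; rewrite {1}(row_sum_delta (\row_k (w k).[z])).
rewrite (multilinear_expand (Psi_ml l2 lm) x0 (fun _ => index_enum 'I_n)
   (fun _ k => (\row_k (w k).[z]) 0 k) (fun _ k => delta_mx 0 k)) summxE.
apply: eq_bigr => c _; rewrite hornerM hornerC horner_prod !mxE; congr (_ * _).
by apply: eq_bigr => i _; rewrite mxE.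
Qed.

Lemma dvdp_Psi_polyB x0 l (w w' : 'I_n -> {poly K}) k j : (2 <= l)%N ->
    (forall i, 'X %| w i) -> (forall i, 'X^(k.+1) %| w' i - w i) ->
  'X^(k.+2) %| Psi_poly x0 l w' j - Psi_poly x0 l w j.
Proof.
case: l => [|[|l]] // _ dvdXw dvdXw'; rewrite /Psi_poly -sumrB.
apply: dvdp_sum => c _; rewrite -mulrBl; apply: dvdp_mulr.
apply: dvdp_trans (dvdp_Xn_prodB (k := k.+1) (a := fun i => w' (nth x0 c i)) l.+1 _ _ _) => //.
by rewrite dvdp_exp2l // addnS ltnS leq_addr.
Qed.

Lemma Psi_poly_fixpoint_eq0 x0 (b e : 'I_n -> {poly K}) :
    (forall j, 'X %| b j) -> (forall j, 'X %| e j) ->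
    (forall j, e j = \sum_(l <- arities m)
                       (Psi_poly x0 l (fun k => b k + e k) j - Psi_poly x0 l b j)) ->
  forall j, e j = 0.
Proof.
move=> dvdXb dvdXe e_fix j; apply: dvdp_Xn_eq0 => k.
suff dvdXke : forall j, 'X^(k.+1) %| e j by apply: dvdp_trans (dvdXke j); rewrite dvdp_exp2l.
elim: k {j} => [|k IH] j; first by rewrite expr1.
rewrite e_fix big_seq; apply: dvdp_sum => l; rewrite mem_arities => /andP[l2 _].
by apply: dvdp_Psi_polyB => // i; rewrite addrAC subrr add0r.
Qed.

Lemma yag_mapK : cancel (yag_map m Psi) yag_inv.
Proof.
move=> x; have [P HP] : is_polymap (fun z => yag_inv (yag_map m Psi z)).
  exact/(polymap_inv_trunc Psi_ml)/(polymap_yag_map Psi_ml).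
have [n0|n_gt0] := posnP n; first by apply/rowP => j; have := ltn_ord j; rewrite {2}n0.
pose line i : {poly K} := x 0 i *: 'X.
pose e j := mmap (@polyC K) line (P j) - line j.
have on_line z : yag_inv (yag_map m Psi (z *: x)) = z *: x + \row_k (e k).[z].
  apply/rowP => k; rewrite !mxE /e /line hornerD hornerN horner_mmap HP.
  rewrite (meval_eq _ (v1 := fun i => (x 0 i *: 'X).[z]) (v2 := fun i => (z *: x) 0 i)) => [|i].
    by rewrite hornerZ hornerX [z * _]mulrC addrC subrK.
  by rewrite hornerZ hornerX mxE mulrC.
have e_fix j : e j = \sum_(l <- arities m)
    (Psi_poly (Ordinal n_gt0) l (fun k => line k + e k) j - Psi_poly (Ordinal n_gt0) l line j).
  apply: (pchar0_poly_horner_inj K0) => z; rewrite horner_sum.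
  have := yag_invK (yag_map m Psi (z *: x)); rewrite on_line /yag_map => /addr_subr_eq.
  rewrite -sumrB => /(congr1 (fun v : 'rV[K]_n => v 0 j)); rewrite mxE summxE => ->.
  rewrite big_seq [RHS]big_seq; apply: eq_bigr => l; rewrite mem_arities => l2m.
  rewrite hornerD hornerN !horner_Psi_poly // !mxE; congr (Psi l _ 0 j - Psi l _ 0 j).
    apply: functional_extensionality => i; apply/rowP => k.
    by rewrite !mxE hornerD hornerZ hornerX mulrC.
  by apply: functional_extensionality => i; apply/rowP => k; rewrite !mxE hornerZ hornerX mulrC.
have dvdX_line i : 'X %| line i by rewrite /line -mul_polyC dvdp_mull.
have dvdXe j : 'X %| e j.
  have := congr1 (fun v : 'rV[K]_n => v 0 j) (on_line 0).
  rewrite scale0r yag_map0 /yag_inv /inv_trunc big1 => [|q _]; last first.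
    by rewrite term_sum_at0 scaler0.
  by rewrite add0r !mxE -['X]subr0 -polyC0 dvdp_XsubCl /root => <-.
have e0 := Psi_poly_fixpoint_eq0 dvdX_line dvdXe e_fix.
have := on_line 1; rewrite !scale1r => ->.
by rewrite (_ : \row_k _ = 0) ?addr0 //; apply/rowP => k; rewrite !mxE e0 horner0.
Qed.

End Backward.

Theorem mainTheorem1 (K : fieldType) (hK : [pchar K] =i pred0) (n m : nat)
    (hm : (2 <= m)%N)
    (Psi : forall l : nat, ('I_l -> 'rV[K]_n) -> 'rV[K]_n)
    (hlin : forall l : nat, (2 <= l)%N -> (l <= m)%N -> multilinear (Psi l))
    (hsym : forall l : nat, (2 <= l)%N -> (l <= m)%N -> symmetric_map (Psi l)) :
  is_polyaut (yag_map m Psi) <-> exists q0 : nat, yagzhev_of_order m Psi q0.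
Proof.
split=> [[_ [G [[P GP] [GK _]]]]|[q0 Yq0]].
  exists (maxn (\max_(j < n) msize (P j)) 1) => q; rewrite geq_max => /andP[le_Pq q_gt0] a.
  apply/sum_terms_vanishE; apply: (term_sum_eq0_of_inverse hK hlin a GP GK) => // j.
  exact: leq_trans (leq_bigmax j) le_Pq.
have vanish a q : (q0 <= q)%N -> term_sum m Psi a q = 0.
  by move=> le_q0q; apply/sum_terms_vanishE/Yq0.
split; first exact: polymap_yag_map.
exists (yag_inv m Psi q0); split; first exact/(polymap_inv_trunc hlin)/polymap_id.
by split; [apply: (yag_mapK hK hlin vanish) | apply: (yag_invK hlin vanish)].
Qed.
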